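(* Let $\rho$ be a type-I elliptic isometry of $\mathbb{H}^4$ with twisting plane $P$. Then a plane $Q$ of $\mathbb{H}^4$ is orthogonal to $P$ through a line (i.e. $Q\cap P$ is a line and $Q$ meets $P$ orthogonally along it) if and only if $\partial Q\in\mathcal{K}_\rho$.
   Context: A type-I elliptic isometry of $\mathbb{H}^4$ is a composition of reflections in two distinct hyperplanes meeting in a plane; its fixed-point set, a plane, is its twisting plane $P$. The permuted pencil $\mathcal{F}_\rho$ is the set of boundaries at infinity of hyperplanes containing $P$. The invariant pencil $\mathcal{T}_\rho$ is the set of boundaries of hyperplanes orthogonal to $P$. The half-turn bank is $\mathcal{K}_\rho=\{s\cap t: s\in\mathcal{F}_\rho,\ t\in\mathcal{T}_\rho\}$, a set of subsets of $\partial\mathbb{H}^4$. *)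

(* hyperboloid model of H^4 inside Minkowski space R^{4,1}. *)
From HB Require Import structures.
From mathcomp Require Import all_boot all_order all_algebra.
From mathcomp Require Import boolp classical_sets reals.
Set Implicit Arguments. Unset Strict Implicit. Unset Printing Implicit Defensive.
Import Order.TTheory GRing.Theory Num.Theory.
Local Open Scope ring_scope.
Local Open Scope classical_set_scope.

Section H4.
Variable R : realType.

(* vectors of R^{4,1}, coordinates 0..4, coordinate 0 is the time coordinate *)
Definition vec := 'rV[R]_5.

Definition mink (u v : vec) : R :=
  \sum_(i < 5) (if i == ord0 then -1 else 1) * u 0 i * v 0 i.

Definition inH4 (x : vec) : Prop := mink x x = -1 /\ 0 < x 0 ord0.

(* points of the boundary at infinity dH^4: null rays, represented by their
   unique representative with time coordinate 1 *)
Definition ideal (p : vec) : Prop := mink p p = 0 /\ p 0 ord0 = 1.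

Definition in_span (S : set vec) (u : vec) : Prop :=
  forall V : 'M[R]_5, (forall x, S x -> (x <= V)%MS) -> (u <= V)%MS.

(* totally geodesic k-dimensional subspaces of H^4:
   nonempty intersections of H^4 with (k+1)-dimensional linear subspaces *)
Definition totgeod (k : nat) (S : set vec) : Prop :=
  exists V : 'M[R]_5, \rank V = k.+1 /\
    S = [set x | inH4 x /\ (x <= V)%MS] /\ exists x, S x.

Definition is_line := totgeod 1.
Definition is_plane := totgeod 2.
Definition is_hyperplane := totgeod 3.

Definition tang (S : set vec) (x u : vec) : Prop := in_span S u /\ mink x u = 0.

Definition bd (S : set vec) : set vec := [set p | ideal p /\ in_span S p].

Definition hyp_of (n : vec) : set vec := [set x | inH4 x /\ mink x n = 0].
Definition refl (n : vec) (x : vec) : vec := x - ((2 * mink x n) / mink n n) *: n.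

Definition type_I_elliptic (rho : vec -> vec) : Prop :=
  exists n1 n2 : vec, 0 < mink n1 n1 /\ 0 < mink n2 n2 /\
    hyp_of n1 <> hyp_of n2 /\ is_plane (hyp_of n1 `&` hyp_of n2) /\
    forall x, inH4 x -> rho x = refl n1 (refl n2 x).

Definition twisting_plane (rho : vec -> vec) : set vec :=
  [set x | inH4 x /\ rho x = x].

Definition hyp_orth (T P : set vec) : Prop :=
  exists n : vec, 0 < mink n n /\ T = hyp_of n /\
    (exists x, T x /\ P x) /\ forall x, T x -> P x -> tang P x n.

Definition permuted_pencil (rho : vec -> vec) : set (set vec) :=
  [set s | exists S, is_hyperplane S /\ twisting_plane rho `<=` S /\ s = bd S].
Definition invariant_pencil (rho : vec -> vec) : set (set vec) :=
  [set t | exists T, is_hyperplane T /\ hyp_orth T (twisting_plane rho) /\ t = bd T].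
Definition half_turn_bank (rho : vec -> vec) : set (set vec) :=
  [set k | exists s t, permuted_pencil rho s /\ invariant_pencil rho t /\ k = s `&` t].

Definition orth_through_line (Q P : set vec) : Prop :=
  is_line (Q `&` P) /\
  forall x u v, (Q `&` P) x -> tang Q x u -> tang P x v ->
    (forall w, tang (Q `&` P) x w -> mink u w = 0) ->
    (forall w, tang (Q `&` P) x w -> mink v w = 0) ->
    mink u v = 0.

End H4.

From mathcomp Require Import all_boot all_order all_algebra.
From mathcomp Require Import boolp classical_sets reals.
From mathcomp Require Import ring lra zify.
Set Implicit Arguments. Unset Strict Implicit. Unset Printing Implicit Defensive.
Import Order.TTheory GRing.Theory Num.Theory.
Local Open Scope ring_scope.
Local Open Scope classical_set_scope.

(* In the hyperboloid model every totally geodesic subspace is the trace [H4_in V]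
   of a linear subspace [V] of R^{4,1}, and [V] is spanned both by its points and by
   its ideal points; so tangency, orthogonality and boundaries of such subspaces can
   be compared through their linear spans. The twisting plane is [P = H4_in VP],
   the common fixed set of the two reflections.
   If [Q] meets [P] orthogonally along the line [L], a normal [v] of [L] inside [P]
   is orthogonal to [L] and to the normals of [L] in [Q], hence to [Q]; then [Q] is
   cut out of the hyperplane spanned by [Q] and [P] (which contains [P]) by the
   hyperplane [v^perp] (which is orthogonal to [P]).
   Conversely, if [bd Q = bd S `&` bd T] with [P] in [S] and [T = n^perp] orthogonal
   to [P], then [Q = S `&` n^perp], so [Q `&` P = P `&` n^perp] is a line, and a
   normal of it in [Q] is orthogonal to the line and to [n], which span [P]. *)

Section RowSpaceRank.
Variables (F : fieldType) (n : nat).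

Lemma mxrank_addsmx_rV m (A : 'M[F]_(m, n)) (u : 'rV_n) :
  ~~ (u <= A)%MS -> \rank (A + u)%MS = (\rank A).+1.
Proof.
move=> uA; have u0 : u != 0 by apply: contraNneq uA => ->; apply: sub0mx.
have r1 : \rank u = 1%N by rewrite rank_rV u0.
have := mxrank_sum_cap A u; rewrite r1 addn1.
have [le_cap_u capE] := mxrank_leqif_sup (capmxSr A u).
have : \rank (A :&: u)%MS != 1%N.
  apply: contra uA => /eqP c1; have : (u <= A :&: u)%MS by rewrite -capE c1 r1.
  by move/submx_trans; apply; apply: capmxSl.
by move: le_cap_u; rewrite r1; case: (\rank _) => [|[]] // _ _; rewrite addn0.
Qed.

Lemma eqmx_of_rank m1 m2 (A : 'M[F]_(m1, n)) (B : 'M[F]_(m2, n)) :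
  (A <= B)%MS -> (\rank B <= \rank A)%N -> (A == B)%MS.
Proof. by move=> sAB rBA; have [_ <-] := mxrank_leqif_eq sAB; rewrite eqn_leq rBA mxrankS. Qed.

Lemma mxrank_capmx_geq m1 m2 (A : 'M[F]_(m1, n)) (B : 'M[F]_(m2, n)) :
  (\rank A + \rank B <= \rank (A :&: B) + n)%N.
Proof. by rewrite -mxrank_sum_cap addnC leq_add2l rank_leq_col. Qed.

Lemma mxrank_capmx_full m1 m2 (A : 'M[F]_(m1, n)) (B : 'M[F]_(m2, n)) :
  \rank (A + B)%MS = n -> \rank (A :&: B)%MS = (\rank A + \rank B - n)%N.
Proof. by move=> full; rewrite -mxrank_sum_cap full addKn. Qed.

End RowSpaceRank.

Section Minkowski.
Variable R : realType.
Implicit Types (u v w x y z n p q : vec R) (V W : 'M[R]_5).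

Let i1 : 'I_5 := lift ord0 (ord0 : 'I_4).
Let i2 : 'I_5 := lift ord0 (lift ord0 (ord0 : 'I_3) : 'I_4).
Let i3 : 'I_5 := lift ord0 (lift ord0 (lift ord0 (ord0 : 'I_2) : 'I_3) : 'I_4).
Let i4 : 'I_5 :=
  lift ord0 (lift ord0 (lift ord0 (lift ord0 (ord0 : 'I_1) : 'I_2) : 'I_3) : 'I_4).

Lemma minkE u v : mink u v = - (u 0 ord0 * v 0 ord0) +
  (u 0 i1 * v 0 i1 + u 0 i2 * v 0 i2 + u 0 i3 * v 0 i3 + u 0 i4 * v 0 i4).
Proof. by rewrite /mink !big_ord_recl big_ord0 /=; ring. Qed.

Lemma minkC u v : mink u v = mink v u.
Proof. by apply: eq_bigr => i _; rewrite mulrAC. Qed.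

Lemma minkDl u v w : mink (u + v) w = mink u w + mink v w.
Proof. by rewrite /mink -big_split; apply: eq_bigr => i _; rewrite mxE /=; ring. Qed.

Lemma minkZl a u w : mink (a *: u) w = a * mink u w.
Proof. by rewrite /mink mulr_sumr; apply: eq_bigr => i _; rewrite mxE; ring. Qed.

Lemma minkDr u v w : mink w (u + v) = mink w u + mink w v.
Proof. by rewrite minkC minkDl !(minkC w). Qed.

Lemma minkZr a u w : mink w (a *: u) = a * mink w u.
Proof. by rewrite minkC minkZl minkC. Qed.

Lemma mink0r u : mink u 0 = 0.
Proof. by rewrite -(scale0r 0) minkZr mul0r. Qed.

Definition mink_lin := (minkDl, minkZl, minkDr, minkZr).

Lemma mink_neq0 n : mink n n != 0 -> n != 0.
Proof. by apply: contraNneq => ->; rewrite mink0r. Qed.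

Lemma mink_H4 x : inH4 x -> mink x x = -1.
Proof. by case. Qed.

Lemma H4_neq0 x : inH4 x -> x != 0.
Proof. by case=> _; apply: contraTneq => ->; rewrite mxE ltxx. Qed.

Lemma sqr_dot4_le (a1 a2 a3 a4 b1 b2 b3 b4 : R) :
  (a1 * b1 + a2 * b2 + a3 * b3 + a4 * b4) ^+ 2 <=
  (a1 ^+ 2 + a2 ^+ 2 + a3 ^+ 2 + a4 ^+ 2) * (b1 ^+ 2 + b2 ^+ 2 + b3 ^+ 2 + b4 ^+ 2).
Proof.
rewrite -subr_ge0.
have -> : (a1 ^+ 2 + a2 ^+ 2 + a3 ^+ 2 + a4 ^+ 2) * (b1 ^+ 2 + b2 ^+ 2 + b3 ^+ 2 + b4 ^+ 2)
    - (a1 * b1 + a2 * b2 + a3 * b3 + a4 * b4) ^+ 2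
  = (a1 * b2 - a2 * b1) ^+ 2 + (a1 * b3 - a3 * b1) ^+ 2 + (a1 * b4 - a4 * b1) ^+ 2
    + (a2 * b3 - a3 * b2) ^+ 2 + (a2 * b4 - a4 * b2) ^+ 2 + (a3 * b4 - a4 * b3) ^+ 2 by ring.
by rewrite !addr_ge0 // sqr_ge0.
Qed.

(* Reverse Cauchy-Schwarz inequality for the timelike vector [x]. *)
Lemma mink_orth_H4 x w : inH4 x -> mink x w = 0 ->
  0 <= mink w w /\ w 0 ord0 ^+ 2 + mink w w <= x 0 ord0 ^+ 2 * mink w w.
Proof.
case; rewrite !minkE => hx t_gt0 hxw.
have cs := sqr_dot4_le (x 0 i1) (x 0 i2) (x 0 i3) (x 0 i4) (w 0 i1) (w 0 i2) (w 0 i3) (w 0 i4).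
set t := x 0 ord0 in hx t_gt0 hxw cs *; set w0 := w 0 ord0 in hxw cs *.
set W := w 0 i1 ^+ 2 + w 0 i2 ^+ 2 + w 0 i3 ^+ 2 + w 0 i4 ^+ 2 in cs.
have -> : w 0 i1 * w 0 i1 + w 0 i2 * w 0 i2 + w 0 i3 * w 0 i3 + w 0 i4 * w 0 i4 = W
  by rewrite /W; ring.
have eX : x 0 i1 ^+ 2 + x 0 i2 ^+ 2 + x 0 i3 ^+ 2 + x 0 i4 ^+ 2 = t ^+ 2 - 1
  by rewrite !expr2; lra.
have eXW : x 0 i1 * w 0 i1 + x 0 i2 * w 0 i2 + x 0 i3 * w 0 i3 + x 0 i4 * w 0 i4 = t * w0
  by lra.
rewrite eX eXW in cs.
have W_ge0 : 0 <= W by rewrite /W !addr_ge0 // sqr_ge0.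
have t2_gt0 : 0 < t ^+ 2 by rewrite exprn_gt0.
have : W <= t ^+ 2 * (W - w0 ^+ 2) by nra.
by split; nra.
Qed.

Lemma mink_orth_H4_gt0 x w : inH4 x -> mink x w = 0 -> w != 0 -> 0 < mink w w.
Proof.
move=> hx hxw; apply: contraNT; rewrite -leNgt => ww_le0.
have [ww_ge0 ineq] := mink_orth_H4 hx hxw.
have ww0 : mink w w = 0 by apply/eqP; rewrite eq_le ww_le0.
have w0 : w 0 ord0 = 0 by apply/eqP; rewrite -sqrf_eq0 eq_le sqr_ge0 andbT; nra.
have sq0 : \sum_i w 0 i ^+ 2 = 0.
  rewrite -[RHS]ww0; apply: eq_bigr => i _.
  by case: eqP => [->|_]; rewrite ?w0 expr2 ?mul1r // !mulr0.
apply/eqP/rowP => i; rewrite mxE; apply/eqP; rewrite -sqrf_eq0; apply/eqP.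
by apply: (psumr_eq0P _ sq0) => // j _; rewrite sqr_ge0.
Qed.

Definition minkJ : 'M[R]_5 := diag_mx (\row_i (if i == ord0 then -1 else 1)).

Lemma minkJ_unit : minkJ \in unitmx.
Proof.
suff /mulmx1_unit[] : minkJ *m minkJ = 1%:M by [].
apply/matrixP => i j; rewrite mul_diag_mx !mxE.
by case: (i == j); case: (i == ord0); rewrite ?mulr0 ?mulrNN ?mulr1.
Qed.

Lemma mink_mulmx u v : mink u v = (u *m minkJ *m v^T) 0 0.
Proof. by rewrite /minkJ mul_mx_diag !mxE; apply: eq_bigr => i _; rewrite !mxE; ring. Qed.

Definition orthmx m (A : 'M[R]_(m, 5)) : 'M[R]_5 := kermx (minkJ *m A^T).

Lemma orthmxP m (A : 'M[R]_(m, 5)) z :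
  (z <= orthmx A)%MS <-> forall w, (w <= A)%MS -> mink z w = 0.
Proof.
split=> [/sub_kermxP zA w /submxP[c ->] | zA].
  by rewrite mink_mulmx trmx_mul !mulmxA -(mulmxA z) zA !mul0mx mxE.
apply/sub_kermxP/rowP => j; rewrite mulmxA !mxE -[RHS](zA _ (row_sub j A)) mink_mulmx mxE.
by apply: eq_bigr => k _; rewrite !mxE.
Qed.

Lemma orthmx_rV z n : (z <= orthmx n)%MS <-> mink z n = 0.
Proof.
rewrite orthmxP; split=> [-> //|zn w /sub_rVP[a ->]].
by rewrite minkZr zn mulr0.
Qed.

Lemma mxrank_orthmx m (A : 'M[R]_(m, 5)) : \rank (orthmx A) = (5 - \rank A)%N.
Proof.
rewrite mxrank_ker -mxrank_tr trmx_mul trmxK mxrankMfree //.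
by rewrite tr_diag_mx row_free_unit minkJ_unit.
Qed.

Lemma orthmx_adds m1 m2 (A : 'M[R]_(m1, 5)) (B : 'M[R]_(m2, 5)) z :
  (z <= orthmx A)%MS -> (z <= orthmx B)%MS -> (z <= orthmx (A + B)%MS)%MS.
Proof.
move=> /orthmxP zA /orthmxP zB; apply/orthmxP => _ /sub_addsmxP[[a b] /= ->].
by rewrite minkDr zA ?zB ?submxMl // addr0.
Qed.

Lemma mxrank_adds_orthmx_rV n V :
  mink n n != 0 -> (n <= V)%MS -> \rank (V + orthmx n)%MS = 5%N.
Proof.
move=> nn nV; apply/eqP; rewrite eqn_leq rank_leq_col /=.
have n_out : ~~ (n <= orthmx n)%MS by apply/negP => /orthmx_rV/eqP; apply/negP.
have n0 := mink_neq0 nn.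
have r4 : \rank (orthmx n) = 4%N by rewrite mxrank_orthmx rank_rV n0.
have sub : (orthmx n + n <= V + orthmx n)%MS.
  by rewrite addsmx_sub addsmxSr (submx_trans nV) ?addsmxSl.
by apply: leq_trans (mxrankS sub); rewrite mxrank_addsmx_rV // r4.
Qed.

Lemma capmx_orthmx_H4 V x : inH4 x -> (x <= V)%MS -> (V :&: orthmx V)%MS = 0.
Proof.
move=> hx xV; apply/eqP/rowV0P => z; rewrite sub_capmx => /andP[zV /orthmxP zVo].
apply/eqP/contraT => z0; have := mink_orth_H4_gt0 hx _ z0.
by rewrite minkC !zVo // ltxx; apply.
Qed.

Lemma mxrank_adds_orthmx_H4 V x : inH4 x -> (x <= V)%MS -> \rank (V + orthmx V)%MS = 5%N.
Proof.
move=> hx xV; have := mxrank_sum_cap V (orthmx V).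
by rewrite (capmx_orthmx_H4 hx xV) mxrank0 addn0 mxrank_orthmx subnKC ?rank_leq_col.
Qed.

Definition H4_in V : set (vec R) := [set x | inH4 x /\ (x <= V)%MS].
Definition ideal_in V : set (vec R) := [set p | ideal p /\ (p <= V)%MS].

Lemma H4_in_cap V W : H4_in V `&` H4_in W = H4_in (V :&: W)%MS.
Proof.
apply/seteqP; split=> y; first by case=> -[hy yV] [_ yW]; split; rewrite // sub_capmx yV.
by case=> hy; rewrite sub_capmx => /andP[].
Qed.

Lemma ideal_in_cap V W : ideal_in V `&` ideal_in W = ideal_in (V :&: W)%MS.
Proof.
apply/seteqP; split=> p; first by case=> -[ip pV] [_ pW]; split; rewrite // sub_capmx pV.
by case=> ip; rewrite sub_capmx => /andP[].
Qed.

Lemma hyp_ofE n : hyp_of n = H4_in (orthmx n).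
Proof. by apply/seteqP; split=> y [hy yn]; split=> //; apply/orthmx_rV. Qed.

Lemma mink_orth_proj x z : inH4 x -> mink x (z + mink z x *: x) = 0.
Proof. by move=> hx; rewrite minkDr minkZr mink_H4 // minkC; ring. Qed.

Lemma H4_lift x w : inH4 x -> mink x w = 0 -> inH4 (Num.sqrt (1 + mink w w) *: x + w).
Proof.
move=> hx xw; have [ww_ge0 ineq] := mink_orth_H4 hx xw; have x0_gt0 := hx.2.
set a := Num.sqrt _; have a2 : a ^+ 2 = 1 + mink w w by rewrite sqr_sqrtr // addr_ge0.
have a_gt0 : 0 < a by rewrite sqrtr_gt0 ltr_pwDl.
split; first by rewrite !mink_lin (minkC w x) xw (mink_H4 hx); nra.
rewrite !mxE; have : w 0 ord0 ^+ 2 < (a * x 0 ord0) ^+ 2 by rewrite exprMn a2; nra.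
have : 0 < a * x 0 ord0 by rewrite mulr_gt0.
by set c := a * x 0 ord0; nra.
Qed.

Lemma in_span_H4_in V x u : H4_in V x -> in_span (H4_in V) u <-> (u <= V)%MS.
Proof.
move=> [hx xV]; split=> [uS|uV W HW]; first by apply: uS => y [].
set w := u + mink u x *: x; set a := Num.sqrt (1 + mink w w).
have yW : ((a *: x + w)%R <= W)%MS.
  by apply: HW; split; [apply: H4_lift; rewrite ?mink_orth_proj | rewrite !addmx_sub ?scalemx_sub].
have -> : u = (a *: x + w) - (a + mink u x) *: x by apply/rowP => i; rewrite !mxE; ring.
by rewrite addmx_sub // eqmx_opp scalemx_sub // HW.
Qed.

Lemma bd_H4_in V x : H4_in V x -> bd (H4_in V) = ideal_in V.
Proof. by move=> Vx; apply/seteqP; split=> p [ip]; split=> //; apply/(in_span_H4_in _ Vx). Qed.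

Lemma tang_H4_in V x u : H4_in V x -> tang (H4_in V) x u <-> (u <= V)%MS /\ mink x u = 0.
Proof. by move=> Vx; rewrite /tang (in_span_H4_in _ Vx). Qed.

Lemma H4_in_sub V W x : H4_in V x -> H4_in V `<=` H4_in W -> (V <= W)%MS.
Proof. by move=> Vx VW; apply/rV_subP => z /(in_span_H4_in _ Vx); apply=> y /VW[]. Qed.

Lemma tang_orth_H4_in V x u : H4_in V x -> mink x u = 0 ->
  (forall w, tang (H4_in V) x w -> mink u w = 0) -> (u <= orthmx V)%MS.
Proof.
move=> [hx xV] xu uT; apply/orthmxP => z zV.
have : mink u (z + mink z x *: x) = 0.
  apply: uT; rewrite tang_H4_in //; split; last exact: mink_orth_proj.
  by rewrite addmx_sub ?scalemx_sub.
by rewrite minkDr minkZr (minkC u x) xu mulr0 addr0.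
Qed.

Lemma ideal_of_null q : mink q q = 0 -> 0 < q 0 ord0 -> ideal ((q 0 ord0)^-1 *: q).
Proof.
move=> qq q0; split; first by rewrite minkZl minkZr qq !mulr0.
by rewrite mxE mulVf ?gt_eqF.
Qed.

Lemma null_orth_H4 x w s : inH4 x -> mink x w = 0 -> w != 0 -> s ^+ 2 = 1 ->
  let q := x + (s / Num.sqrt (mink w w)) *: w in mink q q = 0 /\ 0 < q 0 ord0.
Proof.
move=> hx xw w0 s2 q; rewrite {}/q; have ww_gt0 := mink_orth_H4_gt0 hx xw w0.
have [_ ineq] := mink_orth_H4 hx xw; have x0_gt0 := hx.2.
set k := Num.sqrt _; have k_gt0 : 0 < k by rewrite sqrtr_gt0.
have k2 : k ^+ 2 = mink w w by rewrite sqr_sqrtr ?ltW.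
have d2 : (s / k * w 0 ord0) ^+ 2 * mink w w = w 0 ord0 ^+ 2.
  by rewrite -k2 !exprMn s2; field; rewrite gt_eqF.
split.
  have sk : s / k * (s / k * k ^+ 2) = s ^+ 2 by field; rewrite gt_eqF.
  by rewrite !mink_lin (minkC w x) xw (mink_H4 hx) -k2 sk s2; ring.
rewrite !mxE; have : (s / k * w 0 ord0) ^+ 2 < x 0 ord0 ^+ 2 by nra.
by nra.
Qed.

(* [x] and [w] are the half-sum and a multiple of the half-difference of the null
   vectors [x +- w / sqrt <w,w>]. *)
Lemma orth_H4_sub_ideal V W x w : inH4 x -> mink x w = 0 -> w != 0 ->
  (x <= V)%MS -> (w <= V)%MS -> ideal_in V `<=` ideal_in W -> (x <= W)%MS /\ (w <= W)%MS.
Proof.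
move=> hx xw w0 xV wV VW; set k := Num.sqrt (mink w w).
have k_gt0 : 0 < k by rewrite sqrtr_gt0 (mink_orth_H4_gt0 hx xw w0).
have qW s : s ^+ 2 = 1 -> ((x + (s / k) *: w)%R <= W)%MS.
  move=> s2; have [qq q0] := null_orth_H4 hx xw w0 s2.
  have [_] : ideal_in W (((x + (s / k) *: w) 0 ord0)^-1 *: (x + (s / k) *: w)).
    by apply: VW; split; [apply: ideal_of_null | rewrite scalemx_sub ?addmx_sub ?scalemx_sub].
  by move/(scalemx_sub ((x + (s / k) *: w) 0 ord0)); rewrite scalerA mulfV ?gt_eqF ?scale1r.
have qpW := qW 1 (expr1n _ _).
have qmW : ((x + (-1 / k) *: w)%R <= W)%MS by apply: qW; rewrite sqrrN expr1n.
split.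
  have -> : x = 2^-1 *: (x + (1 / k) *: w) + 2^-1 *: (x + (-1 / k) *: w).
    by apply/rowP => i; rewrite !mxE; field; lra.
  by rewrite addmx_sub ?scalemx_sub.
have -> : w = (k / 2) *: (x + (1 / k) *: w) + (- (k / 2)) *: (x + (-1 / k) *: w).
  by apply/rowP => i; rewrite !mxE; field; lra.
by rewrite addmx_sub ?scalemx_sub.
Qed.

(* [V] is spanned by its ideal points. *)
Lemma ideal_in_sub V W x : H4_in V x -> (1 < \rank V)%N ->
  ideal_in V `<=` ideal_in W -> (V <= W)%MS.
Proof.
move=> [hx xV] rV VW.
have xW : (x <= W)%MS.
  set w := nz_row (V :&: orthmx x)%MS.
  have : (w <= V :&: orthmx x)%MS by apply: nz_row_sub.
  rewrite sub_capmx => /andP[wV /orthmx_rV wx].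
  have w0 : w != 0.
    rewrite nz_row_eq0 -mxrank_eq0 -lt0n.
    have := mxrank_capmx_geq V (orthmx x); rewrite mxrank_orthmx rank_rV H4_neq0 //.
    by lia.
  have xw : mink x w = 0 by rewrite minkC.
  by have [] := orth_H4_sub_ideal hx xw w0 xV wV VW.
apply/rV_subP => z zV; set w := (z + mink z x *: x)%R.
have wV : (w <= V)%MS by rewrite addmx_sub ?scalemx_sub.
have -> : z = w - mink z x *: x by rewrite addrK.
rewrite addmx_sub // ?eqmx_opp ?scalemx_sub //.
have [->|w0] := eqVneq w 0; first exact: sub0mx.
by have [] := orth_H4_sub_ideal hx (mink_orth_proj z hx) w0 xV wV VW.
Qed.

Lemma eqmx_of_ideal_in V W x y : H4_in V x -> H4_in W y ->
  (1 < \rank V)%N -> (1 < \rank W)%N -> ideal_in V = ideal_in W -> (V == W)%MS.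
Proof.
move=> Vx Wy rV rW VW; apply/andP; split.
  by apply: (ideal_in_sub Vx); rewrite // VW.
by apply: (ideal_in_sub Wy); rewrite // VW.
Qed.

Lemma hyp_of_scale c n : c != 0 -> hyp_of (c *: n) = hyp_of n.
Proof.
move=> c0; apply/seteqP; split=> x [hx xn]; split=> //; move: xn; rewrite minkZr.
  by move/eqP; rewrite mulf_eq0 (negbTE c0) => /eqP.
by move=> ->; rewrite mulr0.
Qed.

Lemma twisting_planeE rho n1 n2 : 0 < mink n1 n1 -> 0 < mink n2 n2 ->
  hyp_of n1 <> hyp_of n2 -> (forall x, inH4 x -> rho x = refl n1 (refl n2 x)) ->
  twisting_plane rho = hyp_of n1 `&` hyp_of n2.
Proof.
move=> n1_gt0 n2_gt0 n12 rhoE; apply/seteqP; split=> x; last first.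
  case=> -[hx xn1] [_ xn2]; split=> //.
  rewrite rhoE // /refl xn2 !(mulr0, mul0r, scale0r, subr0).
  by rewrite xn1 !(mulr0, mul0r, scale0r, subr0).
have coef0 (c d : R) : 0 < d -> 2 * c / d = 0 -> c = 0.
  by move=> d_gt0 /eqP; rewrite !mulf_eq0 invr_eq0 pnatr_eq0 (gt_eqF d_gt0) orbF => /eqP.
case=> hx; rewrite rhoE // /refl.
(* [rho x = x - a n2 - b n1], and [a != 0] would make [n2] a multiple of [n1]. *)
set a := 2 * mink x n2 / _; set b := 2 * mink _ n1 / _ => fixed.
have ab : b *: n1 = - (a *: n2).
  by apply/rowP => i; have := congr1 (fun M : vec R => M 0 i) fixed; rewrite !mxE; lra.
have n1_0 := mink_neq0 (lt0r_neq0 n1_gt0).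
have a0 : a = 0.
  apply/eqP/contraT => a0; exfalso; apply: n12.
  have n2E : n2 = (- (a^-1 * b)) *: n1.
    by rewrite scaleNr -scalerA ab scalerN opprK scalerA mulVf // scale1r.
  rewrite n2E hyp_of_scale //.
  by apply: contraTneq n2_gt0 => c0; rewrite n2E c0 scale0r mink0r ltxx.
have b0 : b = 0.
  by apply/eqP; move: ab; rewrite a0 scale0r oppr0 => /eqP; rewrite scaler_eq0 (negbTE n1_0) orbF.
have xn2 : mink x n2 = 0 := coef0 _ _ n2_gt0 a0.
have xn1 : mink x n1 = 0 by have := coef0 _ _ n1_gt0 b0; rewrite a0 scale0r subr0.
by split; split.
Qed.

Lemma eq_H4_in V W : (V == W)%MS -> H4_in V = H4_in W.
Proof.
by move=> /andP[VW WV]; apply/seteqP; split=> y [hy yV]; split; rewrite // (submx_trans yV).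
Qed.

Lemma eq_ideal_in V W : (V == W)%MS -> ideal_in V = ideal_in W.
Proof.
by move=> /andP[VW WV]; apply/seteqP; split=> p [ip pV]; split; rewrite // (submx_trans pV).
Qed.

(* [v] is a normal of the line [L] inside [P]; it is orthogonal to [Q] because [Q] is
   spanned by [L] and the normals of [L] inside [Q]. *)
Lemma orth_through_line_normal VQ VP : \rank VQ = 3%N -> \rank VP = 3%N ->
  orth_through_line (H4_in VQ) (H4_in VP) ->
  exists x v, [/\ H4_in (VQ :&: VP)%MS x, (1 < \rank (VQ :&: VP)%MS)%N, v != 0,
                  (v <= VP)%MS & (VQ <= orthmx v)%MS].
Proof.
move=> rQ rP [[VL [rL [eL [x QPx]]]] Horth]; rewrite eL in Horth.
have Lx : H4_in VL x by move: QPx; rewrite eL.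
have LQP : (VL <= VQ :&: VP)%MS.
  by apply: (H4_in_sub Lx) => y Ly; rewrite -H4_in_cap eL; exact: Ly.
rewrite H4_in_cap in QPx.
have [hx xL] := Lx; move: (LQP); rewrite sub_capmx => /andP[LQ LP].
have Qx : H4_in VQ x by split; rewrite // (submx_trans xL).
have Px : H4_in VP x by split; rewrite // (submx_trans xL).
set v := nz_row (orthmx VL :&: VP)%MS.
have : (v <= orthmx VL :&: VP)%MS by apply: nz_row_sub.
rewrite sub_capmx => /andP[vL vP].
have v0 : v != 0.
  rewrite nz_row_eq0 -mxrank_eq0 -lt0n.
  by have := mxrank_capmx_geq (orthmx VL) VP; rewrite mxrank_orthmx rL rP; lia.
exists x, v; split=> //; first by apply: leq_trans (mxrankS LQP); rewrite rL.
have normal_orth u : (u <= VQ)%MS -> (u <= orthmx VL)%MS -> mink u v = 0.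
  move=> uQ /orthmxP uL; move/orthmxP: vL => vL'.
  apply: (Horth x) => // [||w /(tang_H4_in _ Lx)[wL _]|w /(tang_H4_in _ Lx)[wL _]].
  - by rewrite tang_H4_in // minkC uL.
  - by rewrite tang_H4_in // minkC vL'.
  - exact: uL.
  - exact: vL'.
have vQ : (v <= orthmx (VL + (orthmx VL :&: VQ))%MS)%MS.
  apply: orthmx_adds => //; apply/orthmxP => u; rewrite sub_capmx => /andP[uL uQ].
  by rewrite minkC normal_orth.
have QLN : (VQ <= VL + (orthmx VL :&: VQ))%MS.
  rewrite (matrix_modl _ LQ) sub_capmx submx_refl andbT submx_full //.
  by rewrite /row_full (mxrank_adds_orthmx_H4 hx xL).
apply/rV_subP => q qQ; apply/orthmx_rV; rewrite minkC.
by move/orthmxP: vQ; apply; apply: submx_trans qQ QLN.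
Qed.

Lemma orth_through_line_bank rho VP Q : twisting_plane rho = H4_in VP ->
  \rank VP = 3%N -> is_plane Q -> orth_through_line Q (H4_in VP) ->
  half_turn_bank rho (bd Q).
Proof.
move=> PE rP [VQ [rQ [-> _]]] /(orth_through_line_normal rQ rP).
move=> [x [v [[hx] /[!sub_capmx] /andP[xQ xP] rQP v0 vP Qv]]].
have xv : mink x v = 0 by apply/orthmx_rV; apply: submx_trans Qv.
have vv_gt0 := mink_orth_H4_gt0 hx xv v0.
set VS := (VQ + VP)%MS.
have rS : \rank VS = 4%N.
  apply/eqP; rewrite eqn_leq; apply/andP; split.
    by have := mxrank_sum_cap VQ VP; rewrite /VS rQ rP; lia.
  have vQ : ~~ (v <= VQ)%MS.
    by apply: contraTN vv_gt0 => /(submx_trans)/(_ Qv)/orthmx_rV ->; rewrite ltxx.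
  have QvS : (VQ + v <= VS)%MS by rewrite addsmx_sub addsmxSl (submx_trans vP) ?addsmxSr.
  by apply: leq_trans (mxrankS QvS); rewrite mxrank_addsmx_rV // rQ.
have Sx : H4_in VS x by split; rewrite // (submx_trans xQ) ?addsmxSl.
have Tx : H4_in (orthmx v) x by split; rewrite //; apply/orthmx_rV.
exists (bd (H4_in VS)), (bd (hyp_of v)); split.
  exists (H4_in VS); split; first by exists VS; split; [|split; [|exists x]].
  by split=> //; rewrite PE => y [hy yP]; split; rewrite // (submx_trans yP) ?addsmxSr.
split.
  exists (hyp_of v); split.
    exists (orthmx v); rewrite hyp_ofE mxrank_orthmx rank_rV v0.
    by split=> //; split; last exists x.
  split=> //; rewrite PE; exists v; split=> //; split=> //; split; first by exists x; split; split.
  by move=> y [_ yv] Py; rewrite tang_H4_in.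
rewrite (bd_H4_in (conj hx xQ : H4_in VQ x)) (bd_H4_in Sx) hyp_ofE (bd_H4_in Tx) ideal_in_cap.
apply: eq_ideal_in; apply: eqmx_of_rank; first by rewrite sub_capmx addsmxSl Qv.
rewrite mxrank_capmx_full ?rS ?mxrank_orthmx ?rank_rV ?v0 ?rQ //.
exact: mxrank_adds_orthmx_rV (lt0r_neq0 vv_gt0) (submx_trans vP (addsmxSr _ _)).
Qed.

(* The converse of [orth_through_line_normal]: the normals of [L] in [Q] are orthogonal
   to [L] and to [n], which span [P]. *)
Lemma orth_through_line_of_normal VQ VP n y : \rank VP = 3%N -> 0 < mink n n ->
  (n <= VP)%MS -> (VQ <= orthmx n)%MS ->
  H4_in VQ `&` H4_in VP = H4_in (VP :&: orthmx n)%MS -> H4_in (VP :&: orthmx n)%MS y ->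
  orth_through_line (H4_in VQ) (H4_in VP).
Proof.
move=> rP n_gt0 nP Qn QPE Ly; set VL := (VP :&: orthmx n)%MS.
have nn : mink n n != 0 := lt0r_neq0 n_gt0.
have rL : \rank VL = 2%N.
  rewrite mxrank_capmx_full ?(mxrank_adds_orthmx_rV nn nP) //.
  by rewrite rP mxrank_orthmx rank_rV mink_neq0.
rewrite /orth_through_line QPE; split; first by exists VL; split; last by split; last exists y.
move=> x u v Lx Qu Pv uL _.
have [Qx Px] : H4_in VQ x /\ H4_in VP x by rewrite -QPE in Lx.
have [uQ xu] := (tang_H4_in _ Qx).1 Qu.
have [vP _] := (tang_H4_in _ Px).1 Pv.
have uL' := tang_orth_H4_in Lx xu uL.
have /andP[_ PLn] : (VL + n == VP)%MS.
  apply: eqmx_of_rank; first by rewrite addsmx_sub capmxSl.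
  have nL : ~~ (n <= VL)%MS.
    by apply: contra nn => /(submx_trans)/(_ (capmxSr _ _))/orthmx_rV ->.
  by rewrite mxrank_addsmx_rV // rP rL.
move/orthmxP: (orthmx_adds uL' (submx_trans uQ Qn)); apply.
exact: submx_trans vP PLn.
Qed.

Lemma bank_orth_through_line rho VP Q : twisting_plane rho = H4_in VP ->
  \rank VP = 3%N -> is_plane Q -> half_turn_bank rho (bd Q) ->
  orth_through_line Q (H4_in VP).
Proof.
move=> PE rP [VQ [rQ [-> [x Qx]]]].
move=> [s [t [[S [[VS [rS [-> _]]] [PS ->]]] [[T [_ [hoT ->]]] bdQ]]]].
case: hoT bdQ => n [n_gt0 [-> [[y [[hy yn] Py]] Pn]]] bdQ; rewrite PE in PS Py Pn.
have [nP _] := (tang_H4_in _ Py).1 (Pn y (conj hy yn) Py).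
have PS' : (VP <= VS)%MS := H4_in_sub Py PS.
have yP := Py.2; have yS := submx_trans yP PS'.
have yn' : (y <= orthmx n)%MS by apply/orthmx_rV.
set K := (VS :&: orthmx n)%MS.
have /andP[QK KQ] : (VQ == K)%MS.
  move: bdQ; rewrite (bd_H4_in Qx) (bd_H4_in (conj hy yS : H4_in VS y)) hyp_ofE.
  rewrite (bd_H4_in (conj hy yn' : H4_in (orthmx n) y)) ideal_in_cap.
  apply: (eqmx_of_ideal_in Qx (_ : H4_in K y)); rewrite ?rQ //.
    by split; rewrite // sub_capmx yS.
  have := mxrank_capmx_geq VS (orthmx n).
  by rewrite /K rS mxrank_orthmx rank_rV mink_neq0 ?lt0r_neq0 //; lia.
have Qn : (VQ <= orthmx n)%MS by apply: submx_trans QK (capmxSr _ _).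
apply: (orth_through_line_of_normal (y := y) rP n_gt0 nP Qn); last first.
  by split; rewrite // sub_capmx yP.
rewrite H4_in_cap; apply: eq_H4_in; apply/andP; split; rewrite sub_capmx.
  by rewrite capmxSr (submx_trans (capmxSl _ _) Qn).
rewrite capmxSl andbT (submx_trans _ KQ) // sub_capmx capmxSr andbT.
exact: submx_trans (capmxSl _ _) PS'.
Qed.

End Minkowski.

Theorem theorem5p6 (R : realType) (rho : vec R -> vec R) (Q : set (vec R)) :
  type_I_elliptic rho -> is_plane Q ->
  (orth_through_line Q (twisting_plane rho) <-> half_turn_bank rho (bd Q)).
Proof.
move=> [n1 [n2 [n1_gt0 [n2_gt0 [n12 [[VP [rP [eP _]]] rhoE]]]]]] hQ.
have PE : twisting_plane rho = H4_in VP by rewrite (twisting_planeE n1_gt0 n2_gt0 n12 rhoE).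
rewrite {1}PE; split; [exact: orth_through_line_bank | exact: bank_orth_through_line].
Qed.
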